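(* Let $G=(V,E)$ be a bridgeless connected graph with no $2$-edge-cut, and assume all roots of $F(G,\lambda)$ are real. Let $\gamma$ be the number of $3$-edge-cuts of $G$ and $r=|E|-|V|+1$. Then $$\gamma\ge \frac{(|E|-r)(|E|-1)}{2(r-1)},$$ and the inequality is strict if $r-1$ does not divide $|E|-1$.
   Context: Graphs are finite, undirected, possibly with loops and parallel edges. The flow polynomial $F(G,\lambda)$ is determined by: $F(G,\lambda)=1$ if $E(G)=\emptyset$; $F(G,\lambda)=0$ if $G$ has a bridge; multiplicative over disjoint unions; $F(G,\lambda)=(\lambda-1)F(G-e,\lambda)$ if $e$ is a loop; otherwise $F(G,\lambda)=F(G/e,\lambda)-F(G-e,\lambda)$ ($G/e$ = contraction of $e$). A $k$-edge-cut is a set of $k$ edges whose deletion increases the number of components. *)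

From HB Require Import structures.
From mathcomp Require Import all_boot all_order all_algebra all_field.
Set Implicit Arguments. Unset Strict Implicit. Unset Printing Implicit Defensive.
Import Order.TTheory GRing.Theory Num.Theory.

(* A finite multigraph (loops and parallel edges allowed) is given by a
   finite vertex type V, a finite edge type E and an endpoint map
   ends : E -> V * V (a loop is an edge e with ends e = (v, v)). *)

Section Graph.
Variables (V E : finType) (ends : E -> V * V).

Definition adjE (A : {set E}) : rel V :=
  fun x y => [exists e in A, (ends e == (x, y)) || (ends e == (y, x))].

Definition ncomp (A : {set E}) : nat := n_comp (adjE A) predT.

Definition edge_cut (S : {set E}) : bool := ncomp setT < ncomp (~: S).

Definition k_edge_cut (k : nat) (S : {set E}) : bool := (#|S| == k) && edge_cut S.

Definition connectedG : bool := ncomp setT == 1%N.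

Definition n_3cuts : nat := #|[set S : {set E} | k_edge_cut 3 S]|.

(* flow polynomial, via the standard subset expansion
   F(G,x) = sum_{A subset E} (-1)^{|E|-|A|} x^{|A| - |V| + c(A)} *)
Definition flow_poly : {poly int} :=
  \sum_(A : {set E}) ((-1) ^+ (#|E| - #|A|)) *: 'X^(#|A| + ncomp A - #|V|).

End Graph.

From HB Require Import structures.
From mathcomp Require Import all_boot all_order all_algebra all_field.
From mathcomp Require Import zify ring.
Import Order.TTheory GRing.Theory Num.Theory.
Set Implicit Arguments. Unset Strict Implicit. Unset Printing Implicit Defensive.

(* Write c(A) for the number of components of (V, A) and r = |E| - |V| + 1.
   Deleting a set S of edges contributes a monomial of degree
   r - |S| - 1 + c(E \ S).  With no edge-cut of size at most 2, deleting at most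
   two edges keeps G connected, deleting three leaves at most two components and
   deleting |S| >= 4 leaves at most |S| - 2 of them.  Hence only |S| <= 2 and the
   3-edge-cuts reach the three top degrees, and
   F(G, x) = x^r - |E| x^(r-1) + (C(|E|, 2) - gamma) x^(r-2) + ...
   Since F(G, 1) = 0, the other r - 1 roots are real with sum |E| - 1 and sum of
   squares |E| + 2 gamma - 1, and the Cauchy-Schwarz inequality between these two
   sums is the bound.  In the equality case all these roots equal
   (|E| - 1) / (r - 1); being rational roots of a monic integer polynomial they
   are integers, so r - 1 divides |E| - 1. *)

Section Components.
Local Notation root := fingraph.root.
Variables (V E : finType) (ends : E -> V * V).
Implicit Types (A S T : {set E}) (e : E).

Local Notation adj := (adjE ends).
Local Notation nc := (ncomp ends).

Lemma adjE_sym A : symmetric (adj A).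
Proof.
by move=> x y; apply/existsP/existsP => -[f ef]; exists f; rewrite orbC.
Qed.

Lemma connect_adjE_sym A : connect_sym (adj A).
Proof. exact/sym_connect_sym/adjE_sym. Qed.

Lemma adjE_setU1 A e x y :
  adj (e |: A) x y = [|| adj A x y, ends e == (x, y) | ends e == (y, x)].
Proof.
apply/existsP/idP => [[f]|].
  case/andP; rewrite !inE => /orP[/eqP-> ->|fA fxy]; first by rewrite orbT.
  by apply/orP; left; apply/existsP; exists f; rewrite fA.
case/or3P => [/existsP[f /andP[fA fxy]]|exy|eyx].
- by exists f; rewrite !inE fA orbT.
- by exists e; rewrite !inE eqxx exy.
- by exists e; rewrite !inE eqxx eyx orbT.
Qed.

Lemma adjE_setU1_ends A e : adj (e |: A) (ends e).1 (ends e).2.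
Proof. by rewrite adjE_setU1 -surjective_pairing eqxx orbT. Qed.

Lemma connect_adjE_setU1 A e :
  subrel (connect (adj A)) (connect (adj (e |: A))).
Proof.
by apply: connect_sub => x y rxy; apply: connect1; rewrite adjE_setU1 rxy.
Qed.

Lemma connect_setU1_roots A x v :
  root (adj A) v \in [set root (adj A) (ends x).1; root (adj A) (ends x).2] ->
  connect (adj (x |: A)) (ends x).1 v.
Proof.
have symA := connect_adjE_sym A.
rewrite !inE => /orP[]/eqP/esym/(fingraph.rootP symA) cv.
  exact: connect_adjE_setU1 cv.
apply: connect_trans (connect1 (adjE_setU1_ends A x)) _.
exact: connect_adjE_setU1 cv.
Qed.

Section AddEdge.
Variables (A : {set E}) (e : E).
Local Notation u := (ends e).1.
Local Notation v := (ends e).2.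
Local Notation cl := (closure (adj A) (pred2 u v)).

Lemma mem_closure_ends : (u \in cl) && (v \in cl).
Proof. by rewrite !mem_closure // !inE eqxx ?orbT. Qed.

Lemma closed_adjE_setU1 : closed (adj (e |: A)) cl.
Proof.
have clA : closed (adj A) cl := closure_closed (connect_adjE_sym A) _.
case/andP: mem_closure_ends => ucl vcl.
apply: intro_closed; first exact: connect_adjE_sym.
move=> x y; rewrite adjE_setU1 => /or3P[rxy|/eqP exy|/eqP exy] xcl.
- by rewrite -(clA x y rxy).
- by rewrite -[y]/((x, y).2) -exy.
- by rewrite -[y]/((y, x).1) -exy.
Qed.

Lemma connect_adjE_setU1_notin x :
  x \notin cl -> connect (adj (e |: A)) x =1 connect (adj A) x.
Proof.
move=> xcl y; apply/idP/idP; last exact: connect_adjE_setU1.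
have clA : closed (adj A) cl := closure_closed (connect_adjE_sym A) _.
case/andP: mem_closure_ends => ucl vcl.
have clx : closed (adj (e |: A)) (connect (adj A) x).
  apply: intro_closed; first exact: connect_adjE_sym.
  move=> y1 z; rewrite adjE_setU1 => /or3P[ryz|/eqP eyz|/eqP eyz] cxy.
  - exact: connect_trans cxy (connect1 ryz).
  - by move: xcl; rewrite (closed_connect clA cxy) -[y1]/((y1, z).1) -eyz ucl.
  - by move: xcl; rewrite (closed_connect clA cxy) -[y1]/((z, y1).2) -eyz vcl.
by move=> cxy; have := closed_connect clx cxy; rewrite !inE connect0 => <-.
Qed.

(* Adding e merges the components of its two ends, whose union is [cl], and
   leaves every component outside [cl] unchanged. *)
Lemma ncomp_setU1 : nc A = nc (e |: A) + ~~ connect (adj A) u v.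
Proof.
set r := adj A; set r' := adj (e |: A).
have [symr symr'] := (connect_adjE_sym A, connect_adjE_sym (e |: A)).
case/andP: mem_closure_ends => ucl vcl.
have in_cl : n_comp r' cl = 1.
  rewrite -(n_comp_connect symr' u); apply: eq_n_comp_r => x.
  apply/idP/idP => [|cux]; last by rewrite -(closed_connect closed_adjE_setU1 cux).
  rewrite unfold_in => /pred0Pn[z /andP[/= cxz zuv]].
  rewrite [_ \in _]symr'; apply: connect_trans (connect_adjE_setU1 e (cxz : connect r x z)) _.
  case/pred2P: zuv => ->; first exact: connect0.
  by rewrite symr'; apply/connect1/adjE_setU1_ends.
have out_cl : n_comp r' [predC cl] = n_comp r [predC cl].
  apply: eq_card => x; rewrite !inE.
  case xcl: (x \in cl); rewrite ?andbF // !andbT.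
  have eqc := connect_adjE_setU1_notin (negbT xcl).
  by rewrite /roots /root; congr (odflt _ _ == _); apply: eq_pick.
rewrite /ncomp (n_compC cl r) (n_compC cl r') n_comp_closure2 // in_cl out_cl.
by rewrite add1n addSn addnC.
Qed.

End AddEdge.

Lemma ncomp_set0 : nc set0 = #|V|.
Proof.
have adj0 x y : connect (adj set0) x y -> y = x.
  case/connectP => -[|z p] /=; first by move=> _ ->.
  by case/andP => /existsP[f]; rewrite inE.
rewrite /ncomp /n_comp_mem; apply: eq_card => x; rewrite !inE /= andbT.
exact/eqP/adj0/connect_root.
Qed.

Lemma ncomp_gt0 A : (0 < #|V|)%N -> (0 < nc A)%N.
Proof.
case/card_gt0P => v0 _; apply/card_gt0P; exists (root (adj A) v0).
by rewrite !inE /= roots_root //; apply: connect_adjE_sym.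
Qed.

Lemma ncomp_le_card A : (nc A <= #|V|)%N.
Proof. exact: max_card. Qed.

Lemma ncomp_setU1_le A e : (nc A <= nc (e |: A) + 1)%N.
Proof. by rewrite (ncomp_setU1 A e) leq_add2l leq_b1. Qed.

Lemma ncomp_setU1_connect A e :
  connect (adj A) (ends e).1 (ends e).2 -> nc (e |: A) = nc A.
Proof. by move=> cuv; rewrite (ncomp_setU1 A e) cuv addn0. Qed.

Lemma ncomp_setU_le A T : (nc A <= nc (A :|: T) + #|T|)%N.
Proof.
move cardT : #|T| => n; elim: n T cardT => [|n IH] T cardT.
  by move/eqP: cardT; rewrite cards_eq0 => /eqP->; rewrite setU0 addn0.
have [e eT] : exists e, e \in T by apply/set0Pn; rewrite -card_gt0 cardT.
have cardTe : #|T :\ e| = n by move: cardT; rewrite (cardsD1 e T) eT add1n => -[].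
have := IH _ cardTe; have := ncomp_setU1_le (A :|: (T :\ e)) e.
by rewrite setUCA setD1K //; lia.
Qed.

Lemma card_vertices_le A : (#|V| <= #|A| + nc A)%N.
Proof. by have := ncomp_setU_le set0 A; rewrite set0U ncomp_set0 addnC. Qed.

Lemma setCD1 S e : ~: (S :\ e) = e |: ~: S.
Proof. by rewrite setCD setUC. Qed.

Lemma ncomp_setCD1_le S e : (nc (~: S) <= nc (~: (S :\ e)) + 1)%N.
Proof. by rewrite setCD1 ncomp_setU1_le. Qed.

End Components.

Lemma pigeonhole_in (T T' : finType) (f : T -> T') (A : {set T}) (B : {set T'}) :
  {in A, forall x, f x \in B} -> (#|B| < #|A|)%N ->
  exists2 x, x \in A & exists2 y, y \in [predD1 A & x] & f x = f y.
Proof.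
move=> fAB ltBA; apply/dinjectivePn; apply: contraTN ltBA => /dinjectiveP injf.
rewrite -leqNgt -(card_in_imset injf); apply/subset_leq_card/subsetP.
by move=> _ /imsetP[x xA ->]; apply: fAB.
Qed.

Section NoSmallCuts.
Variables (V E : finType) (ends : E -> V * V).
Hypotheses (conn : connectedG ends)
  (no1cut : forall S : {set E}, ~~ k_edge_cut ends 1 S)
  (no2cut : forall S : {set E}, ~~ k_edge_cut ends 2 S).
Implicit Types S : {set E}.

Local Notation adj := (adjE ends).
Local Notation nc := (ncomp ends).
Local Notation root := fingraph.root.

Lemma card_vertices_gt0 : (0 < #|V|)%N.
Proof. by rewrite -(eqP conn) ncomp_le_card. Qed.

Lemma ncomp_setC_le S : (nc (~: S) <= #|S| + 1)%N.
Proof. by have := ncomp_setU_le ends (~: S) S; rewrite setUC setUCr (eqP conn) addnC. Qed.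

Lemma ncomp_setC_small S : (#|S| <= 2)%N -> nc (~: S) = 1%N.
Proof.
move=> le2; have := ncomp_gt0 ends (~: S) card_vertices_gt0.
have := no1cut S; have := no2cut S; rewrite /k_edge_cut /edge_cut (eqP conn).
have [/eqP|] := posnP #|S|; first by rewrite cards_eq0 => /eqP->; rewrite setC0 (eqP conn).
by move: le2; case: #|S| => [|[|[|]]] //=; lia.
Qed.

Lemma ncomp_setC3 S : #|S| = 3 -> (nc (~: S) <= 2)%N.
Proof.
move=> cardS; have [x xS] : exists x, x \in S by apply/set0Pn; rewrite -card_gt0 cardS.
have cardSx : #|S :\ x| = 2 by move: cardS; rewrite (cardsD1 x S) xS add1n => -[].
by apply: leq_trans (ncomp_setCD1_le ends S x) _; rewrite ncomp_setC_small ?cardSx.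
Qed.

(* Were there three components, each deleted edge would join two of them, so by
   pigeonhole two deleted edges x, y join the same pair; restoring x and then y
   leaves two components, although deleting only the other two edges leaves one. *)
Lemma ncomp_setC4 S : #|S| = 4 -> (nc (~: S) <= 2)%N.
Proof.
move=> cardS; rewrite leqNgt; apply/negP => gt2.
have cardSD1 x : x \in S -> #|S :\ x| = 3.
  by move=> xS; move: cardS; rewrite (cardsD1 x S) xS add1n => -[].
have [x0 x0S] : exists x, x \in S by apply/set0Pn; rewrite -card_gt0 cardS.
have ncA : nc (~: S) = 3.
  by have := ncomp_setC3 (cardSD1 x0 x0S); have := ncomp_setCD1_le ends S x0; lia.
set A := ~: S in ncA *; set rt := root (adj A).
have splits x : x \in S -> ~~ connect (adj A) (ends x).1 (ends x).2.
  move=> xS; have := ncomp_setU1 ends A x; rewrite -setCD1 ncA.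
  by have := ncomp_setC3 (cardSD1 x xS); case: (connect _ _ _); lia.
pose P x := [set rt (ends x).1; rt (ends x).2].
pose R := [set w | roots (adj A) w].
have cardR : #|R| = 3.
  by rewrite -ncA /ncomp /n_comp_mem; apply: eq_card => w; rewrite !inE andbT.
have [x xS [y /andP[yx yS] Pxy]] :
    exists2 x, x \in S & exists2 y, y \in [predD1 S & x] & P x = P y.
  apply: (pigeonhole_in (B := [set Q : {set V} | Q \subset R & #|Q| == 2])); last first.
    by rewrite cards_draws cardR cardS.
  move=> x xS; rewrite inE cards2 (root_connect (connect_adjE_sym ends A)) splits //.
  rewrite andbT; apply/subsetP => w; rewrite !inE => /orP[]/eqP->;
    exact/roots_root/connect_adjE_sym.
have joined : connect (adj (x |: A)) (ends y).1 (ends y).2.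
  have yP i : rt i \in P y -> connect (adj (x |: A)) (ends x).1 i.
    by rewrite -Pxy; apply: connect_setU1_roots.
  apply: (@connect_trans _ _ (ends x).1).
    by rewrite connect_adjE_sym; apply: yP; rewrite !inE eqxx.
  by apply: yP; rewrite !inE eqxx orbT.
have := ncomp_setU1 ends A x; rewrite splits // -(ncomp_setU1_connect joined) ncA.
rewrite /A -!setCD1 ncomp_setC_small //.
by move: cardS; rewrite (cardsD1 x S) xS (cardsD1 y (S :\ x)) !inE yx yS; lia.
Qed.

Lemma ncomp_setC_large S : (4 <= #|S|)%N -> (nc (~: S) + 2 <= #|S|)%N.
Proof.
move=> /subnK; move: (#|S| - 4)%N => n; elim: n S => [|n IH] S cardS.
  by have := ncomp_setC4 (esym cardS); lia.
have [x xS] : exists x, x \in S by apply/set0Pn; rewrite -card_gt0 -cardS.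
have cardSx : (n + 4)%N = #|S :\ x|.
  by move: cardS; rewrite (cardsD1 x S) xS add1n addSn => -[].
by have := IH _ cardSx; have := ncomp_setCD1_le ends S x; lia.
Qed.

Lemma k_edge_cut3E S : k_edge_cut ends 3 S = (#|S| == 3) && (nc (~: S) == 2).
Proof.
by rewrite /k_edge_cut /edge_cut (eqP conn); case: eqP => //= /ncomp_setC3; lia.
Qed.

End NoSmallCuts.

Local Open Scope ring_scope.

Lemma sum_nat_indicator (R : pzSemiRingType) (T : finType) (P : pred T) :
  \sum_(x : T) (P x)%:R = #|[set x | P x]|%:R :> R.
Proof. by rewrite cardsE -natr_sum -sum1_card -big_mkcond. Qed.

Lemma sum_sign_card (T : finType) :
  (0 < #|T|)%N -> \sum_(A : {set T}) (-1) ^+ #|A| = 0 :> int.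
Proof.
case/card_gt0P => t _.
pose flip (A : {set T}) := if t \in A then A :\ t else t |: A.
have flipK : involutive flip.
  move=> A; rewrite /flip; case tA: (t \in A); first by rewrite setD11 setD1K.
  by rewrite setU11 setU1K ?tA.
have sign_flip A : (-1) ^+ #|flip A| = - (-1) ^+ #|A| :> int.
  rewrite /flip; case: ifP => tA; last by rewrite cardsU1 tA exprS mulN1r.
  by rewrite [in RHS](cardsD1 t A) tA exprS mulN1r opprK.
set s := \sum_A _; have : s = - s.
  by rewrite {1}/s (reindex_inj (inv_inj flipK)) /= (eq_bigr _ (fun A _ => sign_flip A)) sumrN.
by move/eqP; rewrite -addr_eq0 -mulr2n mulrn_eq0 => /eqP.
Qed.

Section FlowPolynomial.
Variables (V E : finType) (ends : E -> V * V).

Lemma root1_flow_poly : (0 < #|E|)%N -> root (flow_poly ends) 1.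
Proof.
move=> E_gt0; apply/rootP; rewrite horner_sum (reindex_inj (@setC_inj E)) /=.
apply: etrans (sum_sign_card E_gt0); apply: eq_bigr => A _.
by rewrite hornerZ hornerXn expr1n mulr1 -(cardsC A) addnK.
Qed.

Lemma coef_flow_poly j : (flow_poly ends)`_j =
  \sum_(S : {set E}) (-1) ^+ #|S| * (j == #|~: S| + ncomp ends (~: S) - #|V|)%N%:R.
Proof.
rewrite /flow_poly coef_sum (reindex_inj (@setC_inj E)) /=.
by apply: eq_bigr => S _; rewrite coefZ coefXn -(cardsC S) addnK.
Qed.

End FlowPolynomial.

Section TopCoefficients.
Variables (V E : finType) (ends : E -> V * V).
Hypotheses (conn : connectedG ends)
  (no1cut : forall S : {set E}, ~~ k_edge_cut ends 1 S)
  (no2cut : forall S : {set E}, ~~ k_edge_cut ends 2 S).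
Implicit Types S : {set E}.

Local Notation nc := (ncomp ends).
Local Notation F := (flow_poly ends).
Local Notation r := (#|E| + 1 - #|V|)%N.
(* the degree of the term of [flow_poly] indexed by the edge set ~: S *)
Local Notation deg S := (#|~: S| + nc (~: S) - #|V|)%N.

Lemma flow_exponentE S : (deg S + #|S| + 1 = r + nc (~: S))%N.
Proof.
have := card_vertices_le ends (~: S); have := card_vertices_le ends setT.
by rewrite (eqP conn) cardsT; have := cardsC S; lia.
Qed.

Lemma flow_exponent_le S : (deg S <= r)%N.
Proof. by have := flow_exponentE S; have := ncomp_setC_le conn S; lia. Qed.

Lemma flow_exponent_top S i : (i <= 2)%N -> (2 <= r)%N ->
  (r - i == deg S)%N = (#|S| == i) || (i == 2) && k_edge_cut ends 3 S.
Proof.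
move=> le_i2 r_ge2; rewrite (k_edge_cut3E conn) //; have := flow_exponentE S.
have := @ncomp_setC_small _ _ _ conn no1cut no2cut S.
have := @ncomp_setC3 _ _ _ conn no1cut no2cut S.
have := @ncomp_setC_large _ _ _ conn no1cut no2cut S.
lia.
Qed.

Lemma cycle_rank_ge2 : (2 <= #|E|)%N -> (2 <= r)%N.
Proof.
move=> E_ge2; have : (0 < #|[set S : {set E} | #|S| == 2%N]|)%N.
  by rewrite card_draws bin_gt0.
case/card_gt0P => S; rewrite inE => /eqP cardS.
have := flow_exponentE S; rewrite ncomp_setC_small ?cardS //; lia.
Qed.

Lemma coef_flow_poly_gt j : (r < j)%N -> F`_j = 0.
Proof.
move=> lt_rj; rewrite coef_flow_poly big1 // => S _.
by rewrite (_ : (j == _) = false) ?mulr0 //; have := flow_exponent_le S; lia.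
Qed.

Lemma coef_flow_poly_top i : (i <= 2)%N -> (2 <= #|E|)%N ->
  F`_(r - i) = (-1) ^+ i * 'C(#|E|, i)%:R - (i == 2)%N%:R * (n_3cuts ends)%:R.
Proof.
move=> le_i2 E_ge2; rewrite coef_flow_poly.
have term S : (-1) ^+ #|S| * ((r - i)%N == deg S)%:R =
    (-1) ^+ i * (#|S| == i)%:R - (i == 2)%N%:R * (k_edge_cut ends 3 S)%:R :> int.
  rewrite flow_exponent_top ?cycle_rank_ge2 // /k_edge_cut.
  have [eqSi|neSi] := eqVneq #|S| i.
    have -> : (#|S| == 3)%N = false by lia.
    by rewrite eqSi /= mulr0 subr0.
  rewrite /= mulr0 add0r; case: (i == 2)%N; last by rewrite /= mulr0 mul0r oppr0.
  by case: (eqVneq #|S| 3) => [->|]; case: (edge_cut ends S); rewrite /= ?mulr0 ?oppr0.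
rewrite (eq_bigr _ (fun S _ => term S)) sumrB -!mulr_sumr !sum_nat_indicator.
by rewrite card_draws.
Qed.

Lemma coef_flow_poly_rank : (2 <= #|E|)%N -> F`_r = 1.
Proof.
by move=> E_ge2; rewrite -[r]subn0 coef_flow_poly_top // bin0 mul0r subr0 mulr1.
Qed.

Lemma size_flow_poly : (2 <= #|E|)%N -> size F = r.+1.
Proof.
move=> E_ge2; apply/eqP; rewrite eqn_leq; apply/andP; split.
  by apply/leq_sizeP => j; apply: coef_flow_poly_gt.
rewrite ltnNge; apply/negP => /leq_sizeP /(_ r (leqnn r)).
by rewrite coef_flow_poly_rank.
Qed.

Lemma flow_poly_monic : (2 <= #|E|)%N -> F \is monic.
Proof.
by move=> E_ge2; rewrite monicE lead_coefE size_flow_poly //= coef_flow_poly_rank.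
Qed.

End TopCoefficients.

(* The factor 'X^2 keeps the coefficient indices of the induction from
   truncating at 0. *)
Lemma coef_prod_XsubC_mulX2 (R : comNzRingType) (s : seq R) :
  let Q := (\prod_(z <- s) ('X - z%:P)) * 'X^2 in
  [/\ Q`_(size s).+2 = 1, Q`_(size s).+1 = - \sum_(z <- s) z &
      2 * Q`_(size s) = (\sum_(z <- s) z) ^+ 2 - \sum_(z <- s) z ^+ 2].
Proof.
elim: s => [|z s [IH1 IH2 IH3]] /=.
  by rewrite !big_nil mul1r !coefXn /=; split => //; ring.
set Q := (\prod_(z <- s) ('X - z%:P)) * 'X^2.
have -> : (\prod_(y <- z :: s) ('X - y%:P)) * 'X^2 = ('X - z%:P) * Q.
  by rewrite big_cons -mulrA.
have coefQ k : (('X - z%:P) * Q)`_k.+1 = Q`_k - z * Q`_k.+1.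
  by rewrite mulrBl coefB coefXM coefCM.
have Qtop : Q`_(size s).+3 = 0.
  by rewrite coefMXn /= subn2 /=; apply: nth_default; rewrite size_prod_XsubC.
rewrite !coefQ IH1 IH2 Qtop !big_cons; split.
- by rewrite mulr0 subr0.
- by rewrite mulr1; ring.
- by rewrite mulrBr IH3; ring.
Qed.

Lemma coef_prod_XsubC_sub2 (R : comNzRingType) (s : seq R) : (2 <= size s)%N ->
  2 * (\prod_(z <- s) ('X - z%:P))`_(size s - 2) =
  (\sum_(z <- s) z) ^+ 2 - \sum_(z <- s) z ^+ 2.
Proof.
by move=> s_ge2; have [_ _ <-] := coef_prod_XsubC_mulX2 s; rewrite coefMXn ltnNge s_ge2.
Qed.

Lemma sum_sqr_dev (R : comNzRingType) (s : seq R) :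
  let m := (size s)%:R in
  \sum_(z <- s) (m * z - \sum_(y <- s) y) ^+ 2 =
  m * (m * \sum_(z <- s) z ^+ 2 - (\sum_(z <- s) z) ^+ 2).
Proof.
move=> m; set sg := \sum_(y <- s) y.
rewrite (eq_bigr (fun z => m ^+ 2 * z ^+ 2 + (- (2 * m * sg) * z + sg ^+ 2)));
  last by move=> z _; ring.
rewrite !big_split /= -!mulr_sumr big_const_seq count_predT iter_addr_0 -/sg.
by rewrite -mulr_natl; ring.
Qed.

Section CauchySchwarz.
Variables (R : numDomainType) (s : seq R).
Hypothesis s_real : {in s, forall z, z \is Num.real}.
Local Notation m := ((size s)%:R : R).

Lemma sqr_dev_ge0 z : z \in s -> 0 <= (m * z - \sum_(y <- s) y) ^+ 2.
Proof.
move=> zs; have sum_real : \sum_(y <- s) y \is Num.real.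
  by rewrite big_seq; apply: rpred_sum s_real.
by rewrite -realEsqr rpredB // rpredM ?realn // s_real.
Qed.

Lemma sqr_sum_le : (\sum_(z <- s) z) ^+ 2 <= m * \sum_(z <- s) z ^+ 2.
Proof.
have [->|s_ne0] := eqVneq s [::]; first by rewrite !big_nil mul0r expr0n.
have m_gt0 : 0 < m by rewrite ltr0n lt0n size_eq0.
rewrite -subr_ge0 -(pmulr_rge0 _ m_gt0) -sum_sqr_dev big_seq.
by apply: sumr_ge0; apply: sqr_dev_ge0.
Qed.

Lemma sqr_sum_eq : (\sum_(z <- s) z) ^+ 2 = m * \sum_(z <- s) z ^+ 2 ->
  {in s, forall z, m * z = \sum_(y <- s) y}.
Proof.
move=> eq_sum; have /eqP := sum_sqr_dev s; rewrite -eq_sum subrr mulr0.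
rewrite big_seq psumr_eq0 => [/allP dev0 z zs|z zs].
  by have /implyP/(_ zs) := dev0 z zs; rewrite sqrf_eq0 subr_eq0 => /eqP.
exact: sqr_dev_ge0.
Qed.

End CauchySchwarz.

Lemma intr_natz (R : pzRingType) (n : nat) : (n%:Z)%:~R = n%:R :> R.
Proof. by rewrite -pmulrn. Qed.

Lemma int_monic_rat_root (F : {poly int}) (z : algC) :
  F \is monic -> root (map_poly intr F) z -> z \in Crat -> z \in Num.int.
Proof.
move=> monF Fz zQ; apply: Cint_rat_Aint zQ (root_monic_Aint Fz _ _).
  exact: monic_map.
by apply/polyOverP => i; rewrite coef_map rpred_int.
Qed.

Lemma int_monic_root_sums (F : {poly int}) (d : nat) (e c : int) :
  (2 <= d)%N -> F \is monic -> size F = d.+1 -> F`_d.-1 = - e -> F`_(d - 2) = c ->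
  exists rs : seq algC, [/\ map_poly intr F = \prod_(z <- rs) ('X - z%:P),
    size rs = d, \sum_(z <- rs) z = e%:~R &
    \sum_(z <- rs) z ^+ 2 = e%:~R ^+ 2 - 2 * c%:~R].
Proof.
move=> d_ge2 monF sizeF Fd1 Fd2; set Fc := map_poly intr F.
have [rs Frs] := closed_field_poly_normal Fc.
have monFc : Fc \is monic by exact: monic_map.
rewrite (monicP monFc) scale1r in Frs.
have size_rs : size rs = d.
  have : size Fc = d.+1 by rewrite size_map_inj_poly ?sizeF //; exact: intr_inj.
  by rewrite Frs size_prod_XsubC => -[].
have sum_rs : \sum_(z <- rs) z = e%:~R.
  apply: oppr_inj; rewrite -coefPn_prod_XsubC ?size_rs -?lt0n ?(ltn_trans _ d_ge2) //.
  by rewrite -Frs coef_map /= Fd1 intrN.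
exists rs; split=> //.
have := @coef_prod_XsubC_sub2 _ rs; rewrite size_rs => /(_ d_ge2).
by rewrite -Frs coef_map /= Fd2 sum_rs => c2; rewrite c2; ring.
Qed.

Lemma real_rooted_sqr_sum_bound (F : {poly int}) (d : nat) (e c : int) :
  (2 <= d)%N -> F \is monic -> size F = d.+1 -> F`_d.-1 = - e -> F`_(d - 2) = c ->
  root F 1 -> (forall z : algC, root (map_poly intr F) z -> z \is Num.real) ->
  (e - 1) ^+ 2 <= (d.-1)%:Z * (e ^+ 2 - 2 * c - 1) /\
  ((e - 1) ^+ 2 = (d.-1)%:Z * (e ^+ 2 - 2 * c - 1) -> ((d.-1)%:Z %| e - 1)%Z).
Proof.
move=> d_ge2 monF sizeF Fd1 Fd2 F1 F_real.
have [rs [Frs size_rs sum_rs sum2_rs]] := int_monic_root_sums d_ge2 monF sizeF Fd1 Fd2.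
have rs1 : 1 \in rs.
  by rewrite -root_prod_XsubC -Frs rootE -(rmorph1 (intr : int -> algC)) horner_map
    (eqP F1) rmorph0.
set s := rem 1 rs.
have root_s z : z \in s -> root (map_poly intr F) z.
  by move=> zs; rewrite Frs root_prod_XsubC (mem_rem zs).
have s_real : {in s, forall z, z \is Num.real} by move=> z /root_s/F_real.
have size_s : size s = d.-1 by rewrite size_rem // size_rs.
have sum_s : \sum_(z <- s) z = (e - 1)%:~R.
  by move: sum_rs; rewrite (big_rem _ rs1) /= intrB => <-; ring.
have sum2_s : \sum_(z <- s) z ^+ 2 = (e ^+ 2 - 2 * c - 1)%:~R.
  move: sum2_rs; rewrite (big_rem _ rs1) /= => sum2; apply: (addrI (1 ^+ 2)).
  by rewrite sum2 !intrB intrM rmorphXn /=; ring.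
split.
  rewrite -(ler_int algC) rmorphXn /= intrM intr_natz -size_s -sum_s -sum2_s.
  exact: sqr_sum_le.
move=> eq_sqr; have eq_sum : (\sum_(z <- s) z) ^+ 2 = (size s)%:R * \sum_(z <- s) z ^+ 2.
  by rewrite sum_s sum2_s size_s -intr_natz -intrM -eq_sqr rmorphXn.
have zs : s`_0 \in s by rewrite mem_nth // size_s; lia.
have m_z := sqr_sum_eq s_real eq_sum zs.
have m_neq0 : (size s)%:R != 0 :> algC by rewrite pnatr_eq0 size_s; lia.
have /intrP[k z_k] : s`_0 \in Num.int.
  apply: int_monic_rat_root monF (root_s _ zs) _.
  rewrite -(mulKf m_neq0 (s`_0)) m_z sum_s.
  by rewrite rpredM ?rpredV ?rpred_int ?rpred_nat.
apply/dvdzP; exists k; apply: (@intr_inj algC).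
by rewrite intrM intr_natz -size_s -z_k mulrC m_z sum_s.
Qed.

Lemma cut_ratio_num (e : nat) (r : int) :
  (e%:R - r%:~R) * (e%:R - 1) = ((e%:Z - r) * (e%:Z - 1))%:~R :> rat.
Proof. by rewrite intrM !intrB intr_natz. Qed.

Lemma cut_ratio_le (e g : nat) (r : int) : 1 < r ->
  let rhs : rat := ((e%:R - r%:~R) * (e%:R - 1)) / (2 * (r%:~R - 1)) in
  (rhs <= g%:R) = ((e%:Z - 1) ^+ 2 <= (r - 1) * (e%:Z + 2 * g%:Z - 1)) /\
  (rhs == g%:R) = ((e%:Z - 1) ^+ 2 == (r - 1) * (e%:Z + 2 * g%:Z - 1)).
Proof.
move=> r_gt1 rhs; have den_gt0 : 0 < 2 * (r%:~R - 1) :> rat.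
  by rewrite mulr_gt0 // subr_gt0 ltr1z.
have shift (x : int) : x = (r - 1) * (e%:Z + 2 * g%:Z - 1) - (e%:Z - 1) ^+ 2 ->
    (x%:~R : rat) = g%:R * (2 * (r%:~R - 1)) - (e%:R - r%:~R) * (e%:R - 1).
  by move=> ->; rewrite !(intrB, intrM, intrD, rmorphXn) /= !intr_natz; ring.
split.
  by rewrite /rhs ler_pdivrMr // -subr_ge0 -(shift _ erefl) ler0z subr_ge0.
rewrite /rhs -subr_eq0 -[g%:R](mulfK (lt0r_neq0 den_gt0)) -mulrBl mulf_eq0 invr_eq0.
by rewrite (negPf (lt0r_neq0 den_gt0)) orbF -opprB oppr_eq0 -(shift _ erefl) intr_eq0 subr_eq0 eq_sym.
Qed.

Section ThreeCuts.
Variables (V E : finType) (ends : E -> V * V).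
Hypotheses (conn : connectedG ends)
  (no1cut : forall S : {set E}, ~~ k_edge_cut ends 1 S)
  (no2cut : forall S : {set E}, ~~ k_edge_cut ends 2 S)
  (real_roots : forall z : algC,
     root (map_poly (intr : int -> algC) (flow_poly ends)) z -> z \is Num.real).

Local Notation e := (#|E|%:Z).
Local Notation g := ((n_3cuts ends)%:Z).
Local Notation r := (#|E|%:Z - #|V|%:Z + 1).

Lemma few_edges_degenerate : (#|E| <= 1)%N ->
  (e - r) * (e - 1) = 0 /\ (r - 1 %| e - 1)%Z.
Proof.
have := card_vertices_le ends setT; rewrite cardsT (eqP conn).
have := card_vertices_gt0 conn.
case: #|E| => [|[|//]] V_gt0 V_le _.
  by have -> : #|V| = 1%N by lia.
by rewrite subrr mulr0 dvdz0.
Qed.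

Lemma n_3cuts_bound : (2 <= #|E|)%N ->
  (e - 1) ^+ 2 <= (r - 1) * (e + 2 * g - 1) /\
  ((e - 1) ^+ 2 = (r - 1) * (e + 2 * g - 1) -> (r - 1 %| e - 1)%Z).
Proof.
move=> E_ge2; have r_ge2 := cycle_rank_ge2 conn no1cut no2cut E_ge2.
have coef i (le_i2 : (i <= 2)%N) := coef_flow_poly_top conn no1cut no2cut le_i2 E_ge2.
have F_r1 : (flow_poly ends)`_(#|E| + 1 - #|V|).-1 = - e.
  by rewrite -subn1 (coef 1%N isT) /= bin1 expr1 mulN1r mul0r subr0 natz.
have F_r2 : (flow_poly ends)`_(#|E| + 1 - #|V| - 2) = 'C(#|E|, 2)%:R - g.
  by rewrite (coef 2%N isT) /= sqrrN expr1n !mul1r !natz.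
have := real_rooted_sqr_sum_bound r_ge2 (flow_poly_monic conn no1cut no2cut E_ge2)
  (size_flow_poly conn no1cut no2cut E_ge2) F_r1 F_r2
  (root1_flow_poly ends (ltnW E_ge2)) real_roots.
have -> : ((#|E| + 1 - #|V|).-1)%:Z = r - 1 by lia.
have C2 : 2 * 'C(#|E|, 2)%:R = e * (e - 1) :> int.
  by rewrite -natrM -mul_bin_diag bin1 natrM -subn1 natrB ?(ltnW E_ge2) // !natz.
by have -> : e ^+ 2 - 2 * ('C(#|E|, 2)%:R - g) - 1 = e + 2 * g - 1
  by rewrite mulrBr C2; ring.
Qed.

End ThreeCuts.

Theorem lemma5p2 (V E : finType) (ends : E -> V * V) :
  connectedG ends ->
  (forall S : {set E}, ~~ k_edge_cut ends 1 S) ->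
  (forall S : {set E}, ~~ k_edge_cut ends 2 S) ->
  (forall z : algC, root (map_poly (intr : int -> algC) (flow_poly ends)) z ->
     z \is Num.real) ->
  let r : int := (#|E|%:Z - #|V|%:Z + 1)%R in
  let lhs : rat := (n_3cuts ends)%:R in
  let rhs : rat := ((#|E|%:R - r%:~R) * (#|E|%:R - 1)) / (2 * (r%:~R - 1)) in
  rhs <= lhs /\ (~~ (r - 1 %| #|E|%:Z - 1)%Z -> rhs < lhs).
Proof.
move=> conn no1cut no2cut real_roots r lhs rhs.
have [E_le1 | E_ge2] := leqP #|E| 1.
  have [num0 div] := few_edges_degenerate conn E_le1.
  by rewrite /rhs cut_ratio_num num0 mul0r ler0n div.
have r_gt1 : 1 < r.
  by have := cycle_rank_ge2 conn no1cut no2cut E_ge2; rewrite /r; lia.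
have [bound eq_div] := n_3cuts_bound conn no1cut no2cut real_roots E_ge2.
have [le_iff eq_iff] := cut_ratio_le #|E| (n_3cuts ends) r_gt1.
split; first by rewrite le_iff.
move=> ndiv; rewrite lt_neqAle le_iff bound andbT eq_iff.
by apply: contra ndiv => /eqP; apply: eq_div.
Qed.
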